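(* Fix $a\in(0,1/2)$ and $b\in(0,1)$. There exist constants $c_1>0$ and $c_2>0$ (independent of $n$) such that for all sufficiently large $n$ of the form $n=2^{h+1}-1$, the random-neighbor variant process on the full binary tree with $n$ vertices, rooted at its root, satisfies $\Pr[\tau_{\mathrm{conv}}\ge c_2n]\ge c_1a$.
   Context: Random-neighbor variant. Fix $a,b\in[0,1]$, a connected graph $G=(V,E)$ and a root $r$. Labels $f_t:V\to\{+1,-1,\bot\}$ with $f_t(r)=+1$ for all $t$ and $f_0(v)=\bot$ for $v\ne r$. For $t\ge1$ and each $v\neq r$ independently, let $N_{t-1}(v)=\{u:(u,v)\in E,\ f_{t-1}(u)\ne\bot\}$. If $f_{t-1}(v)=\bot$ and $N_{t-1}(v)=\emptyset$, then $f_t(v)=\bot$. If $f_{t-1}(v)=\bot$ and $N_{t-1}(v)\neq\emptyset$, pick $w$ uniformly from $N_{t-1}(v)$ and set $f_t(v)=f_{t-1}(w)$ w.p. $1-a$ and $-f_{t-1}(w)$ w.p. $a$. If $f_{t-1}(v)\ne\bot$, pick $w$ uniformly at random from $N_{t-1}(v)$ (afresh every round) and set $f_t(v)=f_{t-1}(w)$ w.p. $b$ and $f_t(v)=f_{t-1}(v)$ w.p. $1-b$. The convergence time is $\tau_{\mathrm{conv}}=\min\{t: f_t(v)=+1\ \forall v\in V\}$. The full binary tree of height $h$ has $2^{h+1}-1$ vertices; every non-leaf vertex has exactly two children and all leaves are at distance $h$ from the root. *)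

(* Random-neighbor variant of the broadcasting/labelling
   process, as a finite-state Markov chain with explicit transition
   probabilities; the law of tau_conv is computed from the chain. *)
From HB Require Import structures.
From mathcomp Require Import all_boot all_order all_algebra.
From mathcomp Require Import reals.
Set Implicit Arguments. Unset Strict Implicit. Unset Printing Implicit Defensive.
Import Order.TTheory GRing.Theory Num.Theory.
Local Open Scope ring_scope.

(* Labels: Some true = +1, Some false = -1, None = bottom. *)
Definition state (V : finType) := {ffun V -> option bool}.

Section Process.
Variables (R : realFieldType) (V : finType) (adj : rel V) (r : V) (a b : R).

Definition nbrs (f : state V) (v : V) : {set V} :=
  [set u | adj u v & f u != None].

Definition frac (f : state V) (v : V) (s : bool) : R :=
  #|[set u in nbrs f v | f u == Some s]|%:R / #|nbrs f v|%:R.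

(* probability that f_t(v) = y given f_{t-1} = f *)
Definition step_prob (f : state V) (v : V) (y : option bool) : R :=
  if v == r then (y == Some true)%:R else
  match f v with
  | None =>
      if nbrs f v == set0 then (y == None)%:R else
      match y with
      | None => 0
      | Some s => (1 - a) * frac f v s + a * frac f v (~~ s)
      end
  | Some x =>
      (* a labelled vertex always has a labelled neighbour along reachable
         trajectories; the empty case is irrelevant and we let it keep x *)
      if nbrs f v == set0 then (y == Some x)%:R else
      match y with
      | None => 0
      | Some s => b * frac f v s + (1 - b) * (x == s)%:R
      end
  end.

(* vertices update independently *)
Definition trans (f g : state V) : R := \prod_(v : V) step_prob f v (g v).

Definition init_state : state V :=
  [ffun v => if v == r then Some true else None].

Definition all_plus (f : state V) : bool := [forall v, f v == Some true].

(* surv_dist t g = Pr[ f_t = g  and  f_s is not all +1 for every s < t ] *)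
Fixpoint surv_dist (t : nat) : state V -> R :=
  match t with
  | 0 => fun g => (g == init_state)%:R
  | t'.+1 => fun g =>
      \sum_(f : state V) (~~ all_plus f)%:R * surv_dist t' f * trans f g
  end.

(* Pr[ tau_conv >= t ] = Pr[ f_s is not all +1 for every s < t ] *)
Definition prob_tau_ge (t : nat) : R := \sum_(g : state V) surv_dist t g.

End Process.

(* Full binary tree of height h in heap numbering: vertices 0 .. 2^(h+1)-2,
   root 0, children of u are 2u+1 and 2u+2. *)
Definition btn (h : nat) : nat := (2 ^ h.+1).-1.

Lemma btn_gt0 h : (0 < btn h)%N.
Proof. by rewrite /btn -ltnS prednK ?expn_gt0 // (ltn_exp2l 0). Qed.

Definition bt_root (h : nat) : 'I_(btn h) := Ordinal (btn_gt0 h).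

Definition bt_adj (h : nat) : rel 'I_(btn h) :=
  fun u v => [|| val v == (val u).*2.+1, val v == (val u).*2.+2,
                 val u == (val v).*2.+1 | val u == (val v).*2.+2].
Arguments bt_adj h : clear implicits.
Arguments bt_root h : clear implicits.

From Pilot Require Import Defs.
From HB Require Import structures.
From mathcomp Require Import all_boot all_order all_algebra.
From mathcomp Require Import reals ring lra zify.
Set Implicit Arguments. Unset Strict Implicit. Unset Printing Implicit Defensive.
Import Order.TTheory GRing.Theory Num.Theory.
Local Open Scope ring_scope.

(* The proof is a potential argument.  Let Psi(g) be the sum of the degrees
   of the vertices labelled -1 in g; thus 0 <= Psi <= 3n and Psi vanishes on
   the all-(+1) state.
   (1) Up to time h the labelled vertices are exactly the first 2^(t+1) - 1
       vertices, so the process has not converged before time h, and at time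
       h every leaf receives its first label, which is -1 with probability at
       least a because a <= 1/2.  Hence E[Psi(f_h)] >= a 2^h.
   (2) From time h on all vertices are labelled; by double counting the
       edges, one step lowers E[Psi] by at most 3 (the root's contribution).
   With W t = E[Psi(f_t); tau_conv >= t] (surv_potential) this gives
   a 2^h - 3T <= W T, and W T <= 3n Pr[tau_conv >= T].  Choosing T ~ a n / 24
   yields Pr[tau_conv >= T] >= a / 12 once a 2^h > 12. *)

Lemma card_set_natr (R : pzSemiRingType) (V : finType) (P : pred V) :
  (#|[set u | P u]|%:R : R) = \sum_u (P u)%:R.
Proof.
rewrite -sum1dep_card natr_sum big_mkcond /=.
by apply: eq_bigr => u _; case: (P u).
Qed.

Section Kernel.
Variables (R : realFieldType) (V : finType) (adj : rel V) (r : V) (a b : R).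
Hypotheses (a0 : 0 <= a) (a1 : a <= 1) (b0 : 0 <= b) (b1 : b <= 1).
Local Notation step := (step_prob adj r a b).
Local Notation kernel := (trans adj r a b).
Local Notation mu := (surv_dist adj r a b).
Local Notation surv := (prob_tau_ge adj r a b).
Local Notation frac := (@Defs.frac R V adj).

Lemma sum_option_bool (F : option bool -> R) :
  \sum_(y : option bool) F y = F None + F (Some true) + F (Some false).
Proof.
rewrite (bigD1 None) //= (bigD1 (Some true)) //= (bigD1 (Some false)) //=.
by rewrite big1 ?addr0 ?addrA // => -[[]|].
Qed.

Lemma frac_ge0 f v s : 0 <= frac f v s.
Proof. by rewrite /Defs.frac divr_ge0. Qed.

Lemma frac_total f v :
  nbrs adj f v != set0 -> frac f v true + frac f v false = 1.
Proof.
move=> ne; rewrite /Defs.frac -mulrDl -natrD.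
have -> : (#|[set u in nbrs adj f v | f u == Some true]| +
           #|[set u in nbrs adj f v | f u == Some false]| = #|nbrs adj f v|)%N.
  rewrite -(cardsID [set u | f u == Some true] (nbrs adj f v)).
  congr (_ + _); apply: eq_card => u; rewrite !inE //.
  by case: (f u) => [[]|]; rewrite ?andbF ?andbT.
by rewrite divff // pnatr_eq0 cards_eq0.
Qed.

Lemma step_prob_ge0 f v y : 0 <= step f v y.
Proof.
rewrite /step_prob; case: (v == r) => //; case: (f v) => [x|];
  case: (_ == set0) => //; case: y => // s;
  by rewrite addr_ge0 // mulr_ge0 ?frac_ge0 ?subr_ge0.
Qed.

Lemma step_prob_sum1 f v : \sum_y step f v y = 1.
Proof.
rewrite sum_option_bool /step_prob; case: (v == r) => /=.
  by rewrite add0r addr0.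
case: (f v) => [x|]; case: ifP => [_|/negbT ne] /=.
- by case: x; rewrite ?add0r ?addr0.
- by have /(canRL (addrK _)) -> := frac_total ne; case: x => /=; ring.
- by rewrite !addr0.
- by have /(canRL (addrK _)) -> := frac_total ne; ring.
Qed.

Lemma trans_ge0 f g : 0 <= kernel f g.
Proof. by rewrite /trans prodr_ge0 // => v _; apply: step_prob_ge0. Qed.

Lemma trans_sum1 f : \sum_g kernel f g = 1.
Proof.
rewrite /trans -(@bigA_distr_bigA _ 0 1 *%R +%R) /=.
by rewrite big1 // => v _; apply: step_prob_sum1.
Qed.

Lemma trans_marginal f v y0 :
  \sum_g kernel f g * (g v == y0)%:R = step f v y0.
Proof.
pose F u y := if u == v then step f u y * (y == y0)%:R else step f u y.
transitivity (\sum_(g : state V) \prod_u F u (g u)).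
  apply: eq_bigr => g _; rewrite /trans (bigD1 v) //= [in RHS](bigD1 v) //=.
  rewrite /F eqxx -mulrA [_ * (_ == _)%:R]mulrC mulrA; congr (_ * _).
  by apply: eq_bigr => u /negbTE ->.
rewrite -(@bigA_distr_bigA _ 0 1 *%R +%R) /= (bigD1 v) //=.
rewrite [X in _ * X]big1 => [|u /negbTE uv]; last by rewrite /F uv step_prob_sum1.
rewrite mulr1 /F eqxx (bigD1 y0) //= eqxx mulr1 big1 ?addr0 // => y /negbTE ->.
by rewrite mulr0.
Qed.

Lemma trans_weighted_count f (w : V -> R) y0 :
  \sum_g kernel f g * (\sum_v w v * (g v == y0)%:R) =
  \sum_v w v * step f v y0.
Proof.
under eq_bigr => g _ do rewrite mulr_sumr.
rewrite exchange_big /=; apply: eq_bigr => v _.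
rewrite -trans_marginal mulr_sumr; apply: eq_bigr => g _.
by rewrite mulrCA.
Qed.

Lemma surv_dist_ge0 t g : 0 <= mu t g.
Proof.
elim: t g => [|t IH] g /=; first by rewrite ler0n.
by apply: sumr_ge0 => f _; rewrite !mulr_ge0 ?ler0n ?trans_ge0.
Qed.

Lemma surv_dist_succ t (phi : state V -> R) :
  \sum_g mu t.+1 g * phi g =
  \sum_f (~~ all_plus f)%:R * mu t f * \sum_g kernel f g * phi g.
Proof.
rewrite /=; under eq_bigr => g _ do rewrite mulr_suml.
rewrite exchange_big /=; apply: eq_bigr => f _.
by rewrite mulr_sumr; apply: eq_bigr => g _; rewrite mulrA.
Qed.

Lemma prob_tau_ge_succ t : surv t.+1 <= surv t.
Proof.
have := surv_dist_succ t (fun _ => 1).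
under eq_bigr => g _ do rewrite mulr1; rewrite -/(surv t.+1) => ->.
apply: ler_sum => f _; under eq_bigr => g _ do rewrite mulr1.
rewrite trans_sum1 mulr1.
by case: (all_plus f); rewrite /= ?mul0r ?mul1r ?surv_dist_ge0.
Qed.

Lemma prob_tau_ge_le1 t : surv t <= 1.
Proof.
elim: t => [|t IH]; last exact: le_trans (prob_tau_ge_succ t) IH.
by rewrite /prob_tau_ge /= (bigD1 (init_state r)) //= eqxx big1 ?addr0 //
  => g /negbTE ->.
Qed.

Lemma prob_tau_ge_mono s t : (s <= t)%N -> surv t <= surv s.
Proof.
move=> /subnK <-; elim: (t - s)%N => [|k IH] //=.
exact: le_trans (prob_tau_ge_succ _) IH.
Qed.

End Kernel.

Lemma heap_parent_prefix t v : (0 < v)%N ->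
  (v.-1./2 < (2 ^ t.+1).-1)%N = (v < (2 ^ t.+2).-1)%N.
Proof.
move=> v0; have : (0 < 2 ^ t.+1)%N by rewrite expn_gt0.
have := odd_double_half v.-1.
rewrite [(2 ^ t.+2)%N]expnS -!muln2; case: (odd _) => /= ? ?;
  by apply/idP/idP; lia.
Qed.

Lemma heap_child_prefix t u v : (u < (2 ^ t.+1).-1)%N -> (v <= u.*2.+2)%N ->
  (v < (2 ^ t.+2).-1)%N.
Proof. rewrite [(2 ^ t.+2)%N]expnS -muln2; lia. Qed.

Section BinaryTree.
Variable h : nat.
Local Notation n := (btn h).
Local Notation V := ('I_n).
Local Notation adj := (bt_adj h).
Local Notation r := (bt_root h).

Lemma bt_adj_sym (u v : V) : adj u v = adj v u.
Proof. by rewrite /bt_adj; apply/idP/idP => /or4P[]->; rewrite ?orbT. Qed.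

Lemma bt_adj_le (u v : V) : adj u v -> (val v <= (val u).*2.+2)%N.
Proof. by rewrite /bt_adj => /or4P[]/eqP->; rewrite -!muln2; lia. Qed.

Lemma bt_nonroot (v : V) : (v != r) = (0 < val v)%N.
Proof.
by rewrite lt0n; congr negb; apply/eqP/eqP => [->|e] //; apply: val_inj.
Qed.

Lemma bt_parent (v : V) : (0 < val v)%N ->
  exists2 p : V, adj p v & val p = (val v).-1./2.
Proof.
move=> /= v0; have pn : ((val v).-1./2 < n)%N.
  have : (val v < n)%N := ltn_ord v.
  by have := odd_double_half (val v).-1; rewrite -!muln2; lia.
exists (Ordinal pn) => //; rewrite /bt_adj /=.
have := odd_double_half (val v).-1; rewrite -!muln2.
by case: (odd _) => /= e; apply/or4P; [constructor 2 | constructor 1];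
  apply/eqP; lia.
Qed.

Definition deg (v : V) : nat := #|[set u | adj u v]|.

Lemma deg_le3 v : (deg v <= 3)%N.
Proof.
have single (P : nat -> bool) : (forall x y, P x -> P y -> x = y) ->
    (#|[set u : V | P (val u)]| <= 1)%N.
  move=> uniqP; apply/card_le1P => x; rewrite inE => px y; rewrite !inE.
  by apply/idP/eqP => [py|->//]; apply/val_inj; exact: uniqP py px.
pose child1 := [set u : V | val u == (val v).*2.+1].
pose child2 := [set u : V | val u == (val v).*2.+2].
pose parent := [set u : V | (val v == (val u).*2.+1) || (val v == (val u).*2.+2)].
have sub : [set u | adj u v] \subset child1 :|: child2 :|: parent.
  apply/subsetP => u; rewrite /child1 /child2 /parent !inE /bt_adj.
  by case/or4P => ->; rewrite ?orbT.
apply: leq_trans (subset_leq_card sub) _.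
have c1 : (#|child1| <= 1)%N.
  by apply: (single (fun x => x == (val v).*2.+1)) => x y /eqP-> /eqP->.
have c2 : (#|child2| <= 1)%N.
  by apply: (single (fun x => x == (val v).*2.+2)) => x y /eqP-> /eqP->.
have p1 : (#|parent| <= 1)%N.
  apply: (single (fun x => (val v == x.*2.+1) || (val v == x.*2.+2))).
  by move=> x y /orP[]/eqP e1 /orP[]/eqP e2; rewrite -!muln2 in e1 e2; lia.
apply: leq_trans (leq_card_setU _ _) _; rewrite -[3%N]/(1 + 1 + 1)%N leq_add //.
by apply: leq_trans (leq_card_setU _ _) _; rewrite leq_add.
Qed.

Lemma deg_ge1 v : v != r -> (1 <= deg v)%N.
Proof.
rewrite bt_nonroot => /bt_parent[p apv _].
by rewrite card_gt0; apply/set0Pn; exists p; rewrite inE.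
Qed.

Definition labelled_prefix t (g : state V) : Prop :=
  forall v : V, (g v != None) = (val v < (2 ^ t.+1).-1)%N.

Lemma labelled_prefix_init : labelled_prefix 0 (init_state r).
Proof.
by move=> v; rewrite ffunE -(negbK (v == r)) bt_nonroot; case: (val v).
Qed.

Lemma step_prob_prefix (R : realFieldType) (a b : R) t f v y :
  labelled_prefix t f -> step_prob adj r a b f v y != 0 ->
  (y != None) = (val v < (2 ^ t.+2).-1)%N.
Proof.
move=> Hf; rewrite /step_prob; have [->|vr] := eqVneq v r.
  case: y => [y|] /=; rewrite ?mulr0n ?eqxx // => _.
  have : (0 < 2 ^ t.+1)%N by rewrite expn_gt0.
  by rewrite /= [(2 ^ t.+2)%N]expnS; lia.
have v0 : (0 < val v)%N by rewrite -bt_nonroot.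
have fl := Hf v; case: (f v) => [x|] in fl *.
  have lv : (val v < (2 ^ t.+2).-1)%N.
    by apply: (@heap_child_prefix t (val v)); rewrite -?fl // -muln2; lia.
  by case: ifP => _; case: y => [y|] //=; rewrite ?eqxx ?mulr0n ?lv.
case: ifP => [/eqP ne|/negbT ne].
  case: y => [y|] /=; first by rewrite mulr0n eqxx.
  move=> _; apply/esym/negP => lv; have [p apv pv] := bt_parent v0.
  have : p \in nbrs adj f v by rewrite inE apv Hf pv heap_parent_prefix.
  by rewrite ne inE.
case: y => [y|] /=; last by rewrite eqxx.
move=> _; have [u] := set0Pn _ ne; rewrite inE Hf => /andP[auv lu].
by rewrite (heap_child_prefix lu (bt_adj_le auv)).
Qed.

Lemma surv_dist_prefix (R : realFieldType) (a b : R) t g :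
  surv_dist adj r a b t g != 0 -> labelled_prefix t g.
Proof.
elim: t g => [|t IH] g /=.
  by have [->|_] := eqVneq g (init_state r); rewrite ?eqxx // => _;
    exact: labelled_prefix_init.
move=> ne; have [f /andP [Hs Ht]] :
    exists f, (surv_dist adj r a b t f != 0) && (trans adj r a b f g != 0).
  apply/existsP; apply: contraR ne => /existsPn H; rewrite big1 // => f _.
  by move: (H f); rewrite negb_and !negbK => /orP[]/eqP->; rewrite ?mulr0 ?mul0r.
by move=> v; apply: (step_prob_prefix (IH _ Hs)); move/prodf_neq0: Ht; apply.
Qed.

(* Before time h the last leaf is unlabelled, so the process has not
   converged; from time h on every vertex is labelled. *)
Lemma prefix_not_converged t f :
  (t < h)%N -> labelled_prefix t f -> ~~ all_plus f.
Proof.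
move=> th Hf; have l : (n.-1 < n)%N by rewrite ltn_predL btn_gt0.
apply/forallP => /(_ (Ordinal l)) /eqP e; have := Hf (Ordinal l); rewrite e /=.
have tl : (2 ^ t.+1 <= 2 ^ h)%N by rewrite leq_exp2l.
by rewrite /btn expnS; lia.
Qed.

Lemma prefix_all_labelled t f : (h <= t)%N -> labelled_prefix t f ->
  forall v, f v != None.
Proof.
move=> ht Hf v; rewrite Hf; have : (val v < n)%N := ltn_ord v.
have hl : (2 ^ h.+1 <= 2 ^ t.+1)%N by rewrite leq_exp2l.
by rewrite /= /btn; lia.
Qed.

End BinaryTree.

Section PotentialArgument.
Variables (h : nat) (R : realFieldType) (a b : R).
Hypotheses (a0 : 0 <= a) (a_half : a <= 2^-1) (b0 : 0 <= b) (b1 : b <= 1).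
Local Notation n := (btn h).
Local Notation V := ('I_n).
Local Notation adj := (bt_adj h).
Local Notation r := (bt_root h).
Local Notation step := (step_prob adj r a b).

Let two_a_le1 : 0 <= 1 - 2 * a.
Proof.
have : 2 * a <= 2 * 2^-1 by rewrite ler_pM2l.
by rewrite divff ?pnatr_eq0 // subr_ge0.
Qed.

Let a_le1 : a <= 1.
Proof. by have := two_a_le1; lra. Qed.

Definition Psi (g : state V) : R :=
  \sum_v (deg v)%:R * (g v == Some false)%:R.

Definition neg_nbrs (f : state V) (v : V) : nat :=
  #|[set u | adj u v & f u == Some false]|.

Lemma Psi_le g : Psi g <= 3 * n%:R.
Proof.
rewrite /Psi -[n in X in _ <= _ * X%:R]card_ord -sum1_card natr_sum mulr_sumr.
apply: ler_sum => v _; rewrite mulr1.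
have := deg_le3 v; rewrite -(ler_nat R) => d3.
by case: (_ == _); rewrite ?mulr1 ?mulr0 // (le_trans _ d3).
Qed.

Lemma Psi_all_plus g : all_plus g -> Psi g = 0.
Proof.
by move=> /forallP ap; rewrite /Psi big1 // => v _; rewrite (eqP (ap v)) mulr0.
Qed.

(* Double counting the edges between -1 vertices and their neighbours. *)
Lemma sum_neg_nbrs f : \sum_v ((neg_nbrs f v)%:R : R) = Psi f.
Proof.
under eq_bigr => v _ do rewrite card_set_natr.
rewrite exchange_big /Psi; apply: eq_bigr => u _.
rewrite /deg card_set_natr mulr_suml; apply: eq_bigr => v _.
by rewrite bt_adj_sym; case: (adj v u); case: (_ == _); rewrite ?mulr1 ?mulr0.
Qed.

Lemma leaf_count :
  \sum_(v : V) (((2 ^ h).-1 <= val v)%N)%:R = (2 ^ h)%:R :> R.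
Proof.
have e1 : (n = (2 ^ h).*2.-1)%N by rewrite /btn expnS mul2n.
have h1 : (1 <= 2 ^ h)%N by rewrite expn_gt0.
rewrite -(big_mkord xpredT (fun i => (((2 ^ h).-1 <= i)%N)%:R)).
rewrite (big_cat_nat (n := (2 ^ h).-1)) //=; last by rewrite e1 -muln2; lia.
rewrite big_nat_cond big1 ?add0r => [|i /andP[/andP[_ lt] _]]; last first.
  by rewrite leqNgt lt.
rewrite big_nat_cond (eq_bigr (fun _ => 1)) => [|i /andP[/andP[-> _] _]] //.
by rewrite -big_nat_cond sumr_const_nat e1 -muln2; congr (_%:R); lia.
Qed.

(* At time h each leaf copies its labelled parent (or any labelled
   neighbour) wrongly with probability at least a, as a <= 1/2. *)
Lemma leaf_flip_prob f (v : V) : (1 <= h)%N -> labelled_prefix h.-1 f ->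
  ((2 ^ h).-1 <= val v)%N -> a <= step f v (Some false).
Proof.
move=> h1 Hf leaf; have h2 : (2 <= 2 ^ h)%N by rewrite (leq_exp2l 1).
have v0 : (0 < val v)%N by move: leaf; rewrite /=; lia.
have fv : f v = None.
  by apply/eqP; rewrite -[_ == _]negbK Hf prednK // -leqNgt.
have [p apv pv] := bt_parent v0.
have ne : nbrs adj f v != set0.
  apply/set0Pn; exists p; rewrite inE apv Hf pv heap_parent_prefix //.
  by rewrite prednK //; exact: ltn_ord.
have vr : v != r by rewrite bt_nonroot.
rewrite /step_prob (negbTE vr) fv (negbTE ne) /=.
have := frac_total R ne; have := frac_ge0 R adj f v false.
set x := Defs.frac _ _ f v false; set y := Defs.frac _ _ f v true => x0 xy.
have -> : y = 1 - x by rewrite -xy addrK.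
by have := mulr_ge0 x0 two_a_le1; lra.
Qed.

(* Estimate (1): the expected potential right after the leaves are labelled;
   every leaf has degree at least 1. *)
Lemma potential_at_h f : (1 <= h)%N -> labelled_prefix h.-1 f ->
  a * (2 ^ h)%:R <= \sum_v (deg v)%:R * step f v (Some false).
Proof.
move=> h1 Hf; rewrite -leaf_count mulr_sumr; apply: ler_sum => v _.
case: leqP => leaf; last by rewrite mulr0 mulr_ge0 ?step_prob_ge0.
have h2 : (2 <= 2 ^ h)%N by rewrite (leq_exp2l 1).
have vr : v != r by rewrite bt_nonroot; move: leaf; rewrite /=; lia.
have a_le := leaf_flip_prob h1 Hf leaf.
rewrite mulr1 -[X in X <= _]mul1r; apply: ler_pM => //.
by rewrite ler1n deg_ge1.
Qed.

(* One-step contribution of v to E[Psi] once everything is labelled: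
   v keeps its label w.p. 1-b and copies a random neighbour w.p. b. *)
Definition drift_term (f : state V) (v : V) : R :=
  b * (neg_nbrs f v)%:R + (1 - b) * ((deg v)%:R * (f v == Some false)%:R).

Lemma drift_term_le3 f v : drift_term f v <= 3.
Proof.
have d3 : (deg v)%:R <= 3 :> R by rewrite (ler_nat R _ 3) deg_le3.
have n3 : (neg_nbrs f v)%:R <= 3 :> R.
  apply: le_trans d3; rewrite ler_nat; apply: subset_leq_card.
  by apply/subsetP => u; rewrite !inE => /andP[].
have i3 : (deg v)%:R * (f v == Some false)%:R <= 3 :> R.
  by case: (_ == _); rewrite ?mulr1 ?mulr0.
have b1' : 0 <= 1 - b by rewrite subr_ge0.
have := ler_wpM2l b0 n3; have := ler_wpM2l b1' i3.
by rewrite /drift_term; lra.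
Qed.

Lemma sum_drift_term (f : state V) : \sum_v drift_term f v = Psi f.
Proof.
rewrite big_split /= -!mulr_sumr sum_neg_nbrs -/(Psi f).
by rewrite -mulrDl addrC subrK mul1r.
Qed.

Lemma weighted_step_labelled (f : state V) v :
  (forall u, f u != None) -> v != r ->
  (deg v)%:R * step f v (Some false) = drift_term f v.
Proof.
move=> Hf vr.
have NE : nbrs adj f v = [set u | adj u v].
  by apply/setP => u; rewrite !inE Hf andbT.
have negE : #|[set u in nbrs adj f v | f u == Some false]| = neg_nbrs f v.
  by apply: eq_card => u; rewrite !inE Hf andbT.
have ne : [set u | adj u v] != set0 by rewrite -card_gt0; exact: deg_ge1.
have d0 : (deg v)%:R != 0 :> R by rewrite pnatr_eq0 -lt0n deg_ge1.
rewrite /drift_term /step_prob (negbTE vr) NE (negbTE ne).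
have := Hf v; case: (f v) => [x|] // _.
by rewrite /Defs.frac negE NE -/(deg v); case: x => /=; field.
Qed.

(* Estimate (2): once all vertices are labelled, one step lowers the
   expected potential by at most the root's term, hence by at most 3. *)
Lemma potential_drift (f : state V) : (forall v, f v != None) ->
  Psi f - 3 <= \sum_v (deg v)%:R * step f v (Some false).
Proof.
move=> Hf; rewrite (bigD1 r) //= {1}/step_prob eqxx /= mulr0 add0r.
rewrite (eq_bigr _ (fun v vr => weighted_step_labelled Hf vr)).
by rewrite -sum_drift_term (bigD1 r) //=; have := drift_term_le3 f r; lra.
Qed.

Local Notation mu := (surv_dist adj r a b).
Local Notation surv := (prob_tau_ge adj r a b).

Definition surv_potential t : R := \sum_g mu t g * Psi g.

Lemma prob_tau_ge_before_h t : (t < h)%N -> surv t = 1.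
Proof.
elim: t => [|t IH] th.
  by rewrite /prob_tau_ge /= (bigD1 (init_state r)) //= eqxx big1 ?addr0
    // => g /negbTE ->.
transitivity (\sum_g mu t.+1 g * 1).
  by apply: eq_bigr => g _; rewrite mulr1.
rewrite surv_dist_succ -[RHS](IH (ltnW th)); apply: eq_bigr => f _.
under eq_bigr => g _ do rewrite mulr1.
rewrite trans_sum1 mulr1.
have [->|nz] := eqVneq (mu t f) 0; first by rewrite mulr0.
by rewrite (prefix_not_converged (ltnW th) (surv_dist_prefix nz)) mul1r.
Qed.

Lemma surv_potential_succ t :
  surv_potential t.+1 = \sum_f (~~ all_plus f)%:R * mu t f *
                          \sum_v (deg v)%:R * step f v (Some false).
Proof.
rewrite /surv_potential surv_dist_succ; apply: eq_bigr => f _.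
by rewrite trans_weighted_count.
Qed.

Lemma surv_potential_at_h : (1 <= h)%N -> a * (2 ^ h)%:R <= surv_potential h.
Proof.
move=> h1; rewrite -(prednK h1) surv_potential_succ prednK //.
apply: le_trans (_ : a * (2 ^ h)%:R * surv h.-1 <= _).
  by rewrite prob_tau_ge_before_h ?mulr1 // prednK.
rewrite /prob_tau_ge mulr_sumr; apply: ler_sum => f _.
have [->|nz] := eqVneq (mu h.-1 f) 0; first by rewrite !mulr0 mul0r.
have Hf := surv_dist_prefix nz.
rewrite (prefix_not_converged _ Hf) ?prednK // mul1r mulrC.
by apply: ler_wpM2l; [exact: surv_dist_ge0 | exact: potential_at_h].
Qed.

Lemma surv_potential_drift t : (h <= t)%N ->
  surv_potential t - 3 <= surv_potential t.+1.
Proof.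
move=> ht; rewrite surv_potential_succ.
apply: le_trans (_ : surv_potential t - 3 * surv t <= _).
  by rewrite lerD2l lerN2 ler_piMr ?prob_tau_ge_le1.
rewrite /surv_potential /prob_tau_ge mulr_sumr -sumrB; apply: ler_sum => f _.
have [->|nz] := eqVneq (mu t f) 0; first by rewrite !mulr0 !mul0r subr0.
have Hl := prefix_all_labelled ht (surv_dist_prefix nz).
case: (boolP (all_plus f)) => ap /=.
  by rewrite Psi_all_plus // mulr0 !mul0r sub0r oppr_le0 mulr_ge0 ?surv_dist_ge0.
rewrite mul1r [3 * _]mulrC -mulrBr; apply: ler_wpM2l; first exact: surv_dist_ge0.
exact: potential_drift.
Qed.

Lemma surv_potential_lower k : (1 <= h)%N ->
  a * (2 ^ h)%:R - 3 * k%:R <= surv_potential (h + k).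
Proof.
move=> h1; elim: k => [|k IH].
  by rewrite mulr0 subr0 addn0 surv_potential_at_h.
rewrite addnS; apply: le_trans (surv_potential_drift (leq_addr k h)).
by rewrite [k.+1%:R]mulrSr mulrDr mulr1 opprD addrA lerD2r.
Qed.

(* Psi <= 3n pointwise, hence W t <= 3n Pr[tau_conv >= t]. *)
Lemma surv_potential_le t : surv_potential t <= 3 * n%:R * surv t.
Proof.
rewrite /prob_tau_ge mulr_sumr; apply: ler_sum => g _.
by rewrite mulrC ler_wpM2r ?surv_dist_ge0 ?Psi_le.
Qed.

Lemma survival_potential_bound T : (1 <= h)%N ->
  a * (2 ^ h)%:R - 3 * T%:R <= 3 * n%:R * surv T.
Proof.
move=> h1; case: (leqP T h) => Th.
  apply: le_trans (_ : a * (2 ^ h)%:R <= _).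
    by rewrite gerDl oppr_le0 mulr_ge0.
  apply: le_trans (surv_potential_at_h h1) _.
  apply: le_trans (surv_potential_le h) _.
  by rewrite ler_wpM2l ?mulr_ge0 // (prob_tau_ge_mono _ _ a0 a_le1 b0 b1 Th).
apply: le_trans (surv_potential_le T); rewrite -(subnKC (ltnW Th)).
apply: le_trans (surv_potential_lower _ h1).
by rewrite lerD2l lerN2 ler_wpM2l // ler_nat leq_addl.
Qed.

Lemma survival_lower_bound T : 12 < a * (2 ^ h)%:R ->
  T%:R <= a / 24 * n%:R + 1 -> a / 12 <= surv T.
Proof.
set X : R := (2 ^ h)%:R => aX TB.
have h1 : (1 <= h)%N.
  rewrite lt0n; apply: contraTneq aX => h0.
  by rewrite /X h0 expn0 mulr1 -leNgt; have := a_le1; lra.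
have X0 : 0 < X by rewrite /X ltr0n expn_gt0.
have nX : n%:R <= 2 * X by rewrite /X -natrM ler_nat /btn expnS; lia.
have m0 : 0 <= surv T by apply: sumr_ge0 => g _; exact: surv_dist_ge0.
have TX : T%:R <= a / 12 * X + 1.
  apply: le_trans TB _; rewrite lerD2r.
  have := ler_wpM2l (_ : 0 <= a / 24) nX; rewrite divr_ge0 // => /(_ isT); lra.
have K : a * X - 3 * T%:R <= 6 * X * surv T.
  apply: le_trans (survival_potential_bound T h1) _.
  by rewrite ler_wpM2r //; lra.
have : a * X / 2 <= 6 * X * surv T by lra.
by rewrite -(ler_pM2l X0); nra.
Qed.

End PotentialArgument.

Lemma ceil_natr_le (R : archiRealFieldType) (x : R) : 0 <= x ->
  (`|Num.ceil x|%N)%:R <= x + 1.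
Proof.
move=> x0; rewrite natr_absz ger0_norm ?ceil_ge0 ?(lt_le_trans _ x0) ?ltrN10 //.
by have := ceilB1_lt x; rewrite intrB; lra.
Qed.

Lemma pow2_unbounded (R : archiRealFieldType) (c : R) : 0 <= c ->
  exists h0, forall h, (h0 <= h)%N -> c < (2 ^ h)%:R.
Proof.
move=> c0; exists (Num.Def.archi_bound c) => h hN.
apply: lt_le_trans (archi_boundP c0) _; rewrite ler_nat.
by apply: leq_trans hN _; apply: ltnW; exact: ltn_expl.
Qed.

Unset Implicit Arguments.
Set Strict Implicit.
Theorem mainTheorem18 (R : realType) (a b : R) :
  0 < a < 2^-1 -> 0 < b < 1 ->
  exists c1 c2 : R, 0 < c1 /\ 0 < c2 /\
    exists h0 : nat, forall h : nat, (h0 <= h)%N ->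
      c1 * a <= prob_tau_ge (bt_adj h) (bt_root h) a b
                  `|Num.ceil (c2 * (btn h)%:R)|%N.
Proof.
move=> /andP[a0 a_half] /andP[b0 b1].
have [h0 large] := @pow2_unbounded R (12 / a) (divr_ge0 (ler0n R 12) (ltW a0)).
exists 12^-1, (a / 24); split; first by rewrite invr_gt0.
split; first by rewrite divr_gt0.
exists h0 => h hh; rewrite [_ * a]mulrC.
apply: (survival_lower_bound (ltW a0) (ltW a_half) (ltW b0) (ltW b1)).
  by rewrite -ltr_pdivrMl // mulrC large.
by apply: ceil_natr_le; rewrite mulr_ge0 // divr_ge0 // ltW.
Qed.
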